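(* Let $K=\mathbb{Q}(\sqrt2)$ and $\delta\in K^*$. Let $q_1(t)=t^2-(4+2\sqrt2)t-3-2\sqrt2$ and $p(t)=t^4-12t^3+2t^2+12t+1$, let $H_\delta$ be the genus $2$ curve $\delta W^2=q_1(t)p(t)$ and $E_\delta$ the elliptic curve $\delta y^2=x^3+5\sqrt2x^2-x$. Then $\varphi(t,W)=\left(\frac{-2(-3+2\sqrt2)\,q_1(t)}{(t-\sqrt2+1)^2},\ \frac{3(-4+3\sqrt2)\,W}{(t-\sqrt2+1)^3}\right)$ defines a non-constant morphism $\varphi:H_\delta\to E_\delta$. *)

(* K = Q(sqrt 2) is realised inside algC (algebraic closure of Q),
   which also serves as an algebraic closure of K for geometric points. *)
From mathcomp Require Import all_boot all_order all_algebra all_field.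
Set Implicit Arguments. Unset Strict Implicit. Unset Printing Implicit Defensive.
Import Order.TTheory GRing.Theory Num.Theory.
Local Open Scope ring_scope.

Definition s2 : algC := sqrtC 2.

Definition inK (x : algC) : Prop := exists a b : rat, x = ratr a + ratr b * s2.

Definition q1 (t : algC) : algC := t ^+ 2 - (4 + 2 * s2) * t - 3 - 2 * s2.
Definition pp (t : algC) : algC := t ^+ 4 - 12 * t ^+ 3 + 2 * t ^+ 2 + 12 * t + 1.

Definition onH (delta t W : algC) : Prop := delta * W ^+ 2 = q1 t * pp t.
Definition onE (delta x y : algC) : Prop := delta * y ^+ 2 = x ^+ 3 + 5 * s2 * x ^+ 2 - x.

Definition phiX (t : algC) : algC :=
  (- 2 * (- 3 + 2 * s2) * q1 t) / (t - s2 + 1) ^+ 2.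
Definition phiY (t W : algC) : algC :=
  (3 * (- 4 + 3 * s2) * W) / (t - s2 + 1) ^+ 3.

(* Clearing the denominators of phi, the equation of E_delta at phi(t, W)
   becomes a polynomial identity in t, W and sqrt 2 modulo the equation of
   H_delta and sqrt 2 ^ 2 = 2.  Since W appears in phi only through the factor
   of the y-coordinate, phi sends the two points (0, W) and (0, -W) of H_delta
   (with W <> 0 because q_1(0) p(0) = -3 - 2 sqrt 2 <> 0) to points with
   opposite nonzero y-coordinates, so phi is not constant. *)
From mathcomp Require Import all_boot all_order all_algebra all_field.
From mathcomp Require Import ring.
Import Order.TTheory GRing.Theory Num.Theory.
Local Open Scope ring_scope.

Lemma s2_sqr : s2 ^+ 2 = 2.
Proof. by rewrite /s2 sqrtCK. Qed.

(* Applied with y the conjugate of x in Z[sqrt 2], whose product with x is a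
   nonzero integer. *)
Lemma neq0_of_mul_eq_natS (R : numDomainType) (x y : R) (n : nat) :
  x * y = n.+1%:R -> x != 0.
Proof.
by move=> hxy; apply/eqP => x0; move/eqP: hxy; rewrite x0 mul0r eq_sym pnatr_eq0.
Qed.

Lemma s2_sub1_neq0 : s2 - 1 != 0.
Proof. by apply: (@neq0_of_mul_eq_natS _ _ (s2 + 1) 0); ring: s2_sqr. Qed.

Lemma phiY_coef_neq0 : - 4 + 3 * s2 != 0.
Proof. by apply: (@neq0_of_mul_eq_natS _ _ (4 + 3 * s2) 1); ring: s2_sqr. Qed.

Lemma q1p_at0_neq0 : q1 0 * pp 0 != 0.
Proof.
by rewrite /q1 /pp; apply: (@neq0_of_mul_eq_natS _ _ (- 3 + 2 * s2) 0); ring: s2_sqr.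
Qed.

Lemma pole_neq0 (t : algC) : t != s2 - 1 -> t - s2 + 1 != 0.
Proof. by rewrite -subr_eq0; have -> : t - (s2 - 1) = t - s2 + 1 by ring. Qed.

Lemma phi_onE (delta t W : algC) :
  onH delta t W -> t != s2 - 1 -> onE delta (phiX t) (phiY t W).
Proof.
rewrite /onE /onH /phiX /phiY /q1 /pp => hH /pole_neq0 ht.
by field: hH s2_sqr.
Qed.

Lemma onH_oppW (delta t W : algC) : onH delta t W -> onH delta t (- W).
Proof. by rewrite /onH sqrrN. Qed.

Lemma phiY_oppW (t W : algC) : phiY t (- W) = - phiY t W.
Proof. by rewrite /phiY mulrN mulNr. Qed.

Lemma phiY_neq0 (t W : algC) : t != s2 - 1 -> W != 0 -> phiY t W != 0.
Proof.
move=> /pole_neq0 ht W0; rewrite /phiY mulf_neq0 ?invr_eq0 ?expf_neq0 //.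
by rewrite !mulf_neq0 ?phiY_coef_neq0 // pnatr_eq0.
Qed.

Lemma onH_at0 {delta : algC} : delta != 0 ->
  exists2 W, onH delta 0 W & W != 0.
Proof.
move=> hd; exists (sqrtC (q1 0 * pp 0 / delta)).
  by rewrite /onH sqrtCK; field.
by rewrite sqrtC_eq0 mulf_neq0 ?invr_neq0 ?q1p_at0_neq0.
Qed.

Theorem lemma7p3 (delta : algC) (hK : inK delta) (hd : delta != 0) :
  (forall t W : algC, onH delta t W -> t != s2 - 1 ->
     onE delta (phiX t) (phiY t W)) /\
  (exists t1 W1 t2 W2 : algC,
     [/\ onH delta t1 W1, onH delta t2 W2, t1 != s2 - 1, t2 != s2 - 1 &
         (phiX t1, phiY t1 W1) <> (phiX t2, phiY t2 W2)]).
Proof.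
split; first exact: phi_onE.
have [W hW W0] := onH_at0 hd.
have t0 : (0 : algC) != s2 - 1 by rewrite eq_sym s2_sub1_neq0.
exists 0, W, 0, (- W); split; [exact: hW | exact: onH_oppW | exact: t0 | exact: t0 |].
move=> /(congr1 snd) /=; rewrite phiY_oppW => /eqP.
by rewrite eq_sym eqNr; apply/negP; exact: phiY_neq0 t0 W0.
Qed.
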